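(* Let $A,B\in\mathcal{B}(\mathcal{H})$. Then (i) $w(AB\pm BA)\leq w^{1/2}(A^*A+AA^* )\,w^{1/2}(B^*B+BB^* )$; (ii) $w(AB\pm BA)\leq w^{1/2}(A^*A+B^*B)\,w^{1/2}(AA^*+BB^* )$.
   Context: $\mathcal{H}$ is a complex Hilbert space, $\mathcal{B}(\mathcal{H})$ the bounded linear operators on it, and $w(T)=\sup\{|\langle Tx,x\rangle|:\|x\|=1\}$ the numerical radius. *)

From HB Require Import structures.
From mathcomp Require Import all_boot all_order all_algebra.
From mathcomp Require Import all_classical all_reals.
From mathcomp Require Import complex.
Set Implicit Arguments. Unset Strict Implicit. Unset Printing Implicit Defensive.
Import Order.TTheory GRing.Theory Num.Theory.
Local Open Scope ring_scope.
Local Open Scope classical_set_scope.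

Section Hilbert.
Variables (R : realType) (V : lmodType R[i]).

Definition inner_product_axioms (ip : V -> V -> R[i]) : Prop :=
  [/\ (forall (a : R[i]) (x y z : V), ip (a *: x + y) z = a * ip x z + ip y z),
      (forall x y : V, ip y x = Num.conj (ip x y)),
      (forall x : V, 0 <= ip x x) &
      (forall x : V, ip x x = 0 -> x = 0)].

Definition hnorm (ip : V -> V -> R[i]) (x : V) : R := Num.sqrt (complex.Re (ip x x)).

Definition hcauchy (ip : V -> V -> R[i]) (u : nat -> V) : Prop :=
  forall e : R, 0 < e -> exists N : nat, forall m n : nat,
    (N <= m)%N -> (N <= n)%N -> hnorm ip (u m - u n) < e.

Definition hconverges (ip : V -> V -> R[i]) (u : nat -> V) (l : V) : Prop :=
  forall e : R, 0 < e -> exists N : nat, forall n : nat,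
    (N <= n)%N -> hnorm ip (u n - l) < e.

Definition is_hilbert (ip : V -> V -> R[i]) : Prop :=
  inner_product_axioms ip /\
  (forall u : nat -> V, hcauchy ip u -> exists l : V, hconverges ip u l).

Definition bounded_operator (ip : V -> V -> R[i]) (T : V -> V) : Prop :=
  (forall (a : R[i]) (x y : V), T (a *: x + y) = a *: T x + T y) /\
  (exists M : R, forall x : V, hnorm ip (T x) <= M * hnorm ip x).

Definition is_adjoint (ip : V -> V -> R[i]) (T S : V -> V) : Prop :=
  forall x y : V, ip (T x) y = ip x (S y).

Definition numrad (ip : V -> V -> R[i]) (T : V -> V) : R :=
  sup [set ComplexField.Normc.normc (ip (T x) x) | x in [set x : V | hnorm ip x = 1]].

End Hilbert.

(* For a unit vector x, <(AB +- BA) x, x> = <B x, A^* x> +- <A x, B^* x>, so by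
   Cauchy-Schwarz |<(AB +- BA) x, x>| <= |B x| |A^* x| + |A x| |B^* x|.  Cauchy-Schwarz
   in R^2 bounds this by sqrt(|A x|^2 + |A^* x|^2) sqrt(|B x|^2 + |B^* x|^2), and also by
   sqrt(|A x|^2 + |B x|^2) sqrt(|A^* x|^2 + |B^* x|^2).  Each radicand is the (real,
   nonnegative) value <P x, x> of the matching operator P among A^*A + AA^*, B^*B + BB^*,
   A^*A + B^*B and AA^* + BB^*, hence is at most w(P); take the supremum over x. *)

From HB Require Import structures.
From mathcomp Require Import all_boot all_order all_algebra.
From mathcomp Require Import all_classical all_reals.
From mathcomp Require Import complex.
From mathcomp Require Import ring lra.
Set Implicit Arguments. Unset Strict Implicit. Unset Printing Implicit Defensive.
Import Order.TTheory GRing.Theory Num.Theory.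
Local Open Scope ring_scope.
Local Open Scope complex_scope.

Import ComplexField.Normc.

Lemma sqr_dot2_le {R : realDomainType} (a b c d : R) :
  (a * c + b * d) ^+ 2 <= (a ^+ 2 + b ^+ 2) * (c ^+ 2 + d ^+ 2).
Proof. have := sqr_ge0 (a * d - b * c); nra. Qed.

Lemma sqrt_le_of_le_sqr {R : rcfType} (a b : R) :
  0 <= b -> a <= b ^+ 2 -> Num.sqrt a <= b.
Proof. by move=> b_ge0 ab; rewrite -(ger0_norm b_ge0) -sqrtr_sqr ler_wsqrtr. Qed.

Lemma normc_real {R : rcfType} (a : R) : 0 <= a -> normc a%:C = a.
Proof. by move=> a_ge0 /=; rewrite expr0n addr0 sqrtr_sqr ger0_norm. Qed.

Lemma normc_ge0 {R : rcfType} (z : R[i]) : 0 <= normc z.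
Proof. by case: z => a b; apply: sqrtr_ge0. Qed.

Section InnerProduct.
Variables (R : realType) (V : lmodType R[i]) (ip : V -> V -> R[i]).
Hypothesis hip : inner_product_axioms ip.

Local Notation "`| x |_H" := (hnorm ip x) (format "`| x |_H").

Lemma ipDZl a x y z : ip (a *: x + y) z = a * ip x z + ip y z.
Proof. by case: hip. Qed.

Lemma ipC x y : ip x y = Num.conj (ip y x).
Proof. by case: hip. Qed.

Lemma ip0l z : ip 0 z = 0.
Proof.
have e := ipDZl 1 0 0 z; rewrite scale1r addr0 mul1r in e.
by apply: (addrI (ip 0 z)); rewrite -e addr0.
Qed.

Lemma ipDl x y z : ip (x + y) z = ip x z + ip y z.
Proof. by rewrite -{1}[x]scale1r ipDZl mul1r. Qed.

Lemma ipZl a x z : ip (a *: x) z = a * ip x z.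
Proof. by rewrite -[a *: x]addr0 ipDZl ip0l addr0. Qed.

Lemma ipNl x z : ip (- x) z = - ip x z.
Proof. by rewrite -scaleN1r ipZl mulN1r. Qed.

Lemma ipBl x y z : ip (x - y) z = ip x z - ip y z.
Proof. by rewrite ipDl ipNl. Qed.

Lemma ipDr x y z : ip x (y + z) = ip x y + ip x z.
Proof. by rewrite (ipC x) ipDl rmorphD (ipC x y) (ipC x z). Qed.

Lemma ipZr a x y : ip x (a *: y) = Num.conj a * ip x y.
Proof. by rewrite (ipC x) ipZl rmorphM (ipC x y). Qed.

Lemma ipNr x y : ip x (- y) = - ip x y.
Proof. by rewrite (ipC x) ipNl rmorphN (ipC x y). Qed.

Lemma ipBr x y z : ip x (y - z) = ip x y - ip x z.
Proof. by rewrite ipDr ipNr. Qed.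

Lemma hnorm_ge0 x : 0 <= `|x|_H.
Proof. exact: sqrtr_ge0. Qed.

Lemma ipxx x : ip x x = (`|x|_H ^+ 2)%:C.
Proof.
case: hip => _ _ /(_ x) + _; rewrite /hnorm.
by case: (ip x x) => a b; rewrite lecE /= => /andP[/eqP -> a_ge0]; rewrite sqr_sqrtr.
Qed.

Lemma hnorm_eq0 x : `|x|_H = 0 -> x = 0.
Proof. by move=> x0; case: hip => _ _ _; apply; rewrite ipxx x0 expr0n. Qed.

(* Expanding [<z, z> >= 0] for [z = |y|^2 x - <x, y> y] gives
   [|y|^2 (|x|^2 |y|^2 - |<x, y>|^2) >= 0]. *)
Lemma normc_ip_le x y : normc (ip x y) <= `|x|_H * `|y|_H.
Proof.
have [y0|y_neq0] := eqVneq `|y|_H 0.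
  by rewrite (hnorm_eq0 y0) -(scale0r 0) ipZr rmorph0 mul0r normc0 mulr_ge0 ?hnorm_ge0.
have := ipxx ((`|y|_H ^+ 2)%:C *: x - ip x y *: y).
rewrite ipBl !ipBr !ipZl !ipZr (ipC y x) !ipxx.
case: (ip x y) => a b /=; set X := `|x|_H; set Y := `|y|_H => -[hz _].
apply: sqrt_le_of_le_sqr; first exact: mulr_ge0 (hnorm_ge0 x) (hnorm_ge0 y).
have Y2_gt0 : 0 < Y ^+ 2 by rewrite exprn_gt0 // lt_def y_neq0 /=; apply: hnorm_ge0.
rewrite -subr_ge0 -(pmulr_rge0 _ Y2_gt0).
have -> : Y ^+ 2 * ((X * Y) ^+ 2 - (a ^+ 2 + b ^+ 2)) =
    `|(Y ^+ 2)%:C *: x - (a +i* b) *: y|_H ^+ 2 by rewrite -hz; ring.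
exact: sqr_ge0.
Qed.

Definition norm_bounded (T : V -> V) :=
  exists M, forall x, `|T x|_H <= M * `|x|_H.

Lemma ip_adj_comp T Ts x : is_adjoint ip T Ts -> ip (Ts (T x)) x = (`|T x|_H ^+ 2)%:C.
Proof. by move=> adjT; rewrite ipC -adjT ipxx; apply: conjc_real. Qed.

Lemma ip_comp_adj T Ts x : is_adjoint ip T Ts -> ip (T (Ts x)) x = (`|Ts x|_H ^+ 2)%:C.
Proof. by move=> adjT; rewrite adjT ipxx. Qed.

(* [|Ts x|^2 = <T (Ts x), x> <= M |Ts x| |x|] *)
Lemma norm_bounded_adj T Ts : norm_bounded T -> is_adjoint ip T Ts -> norm_bounded Ts.
Proof.
move=> [M bT] adjT; exists M => x.
have := normc_ip_le (T (Ts x)) x; rewrite (ip_comp_adj _ adjT) normc_real ?sqr_ge0 //.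
have := bT (Ts x); have := bT x.
have := hnorm_ge0 x; have := hnorm_ge0 (T x); have := hnorm_ge0 (Ts x); have := hnorm_ge0 (T (Ts x)).
nra.
Qed.

Definition numrange_bounded (T : V -> V) :=
  exists M, forall x, `|x|_H = 1 -> normc (ip (T x) x) <= M.

Lemma le_numrad T x :
  numrange_bounded T -> `|x|_H = 1 -> normc (ip (T x) x) <= numrad ip T.
Proof. by move=> [M bT] x1; apply: ub_le_sup; [exists M => _ [y /bT y1 <-] | exists x]. Qed.

Lemma numrad_le T c : 0 <= c ->
  (forall x, `|x|_H = 1 -> normc (ip (T x) x) <= c) -> numrad ip T <= c.
Proof.
move=> c_ge0 bT; rewrite /numrad.
set S := (X in sup X); have [->|/set0P S_neq0] := eqVneq S set0; first by rewrite sup0.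
by apply: ge_sup => // _ [x /bT x1 <-].
Qed.

Lemma numrad_le_sqrt_mul T P Q :
  numrange_bounded P -> numrange_bounded Q ->
  (forall x, `|x|_H = 1 ->
     normc (ip (T x) x) ^+ 2 <= normc (ip (P x) x) * normc (ip (Q x) x)) ->
  numrad ip T <= Num.sqrt (numrad ip P) * Num.sqrt (numrad ip Q).
Proof.
move=> bP bQ bT; apply: numrad_le => [|x x1]; first by rewrite mulr_ge0 ?sqrtr_ge0.
have nP_ge0 : 0 <= normc (ip (P x) x) by apply: normc_ge0.
rewrite -sqrtrM; last exact: le_trans nP_ge0 (le_numrad bP x1).
apply: (@le_trans _ _ (Num.sqrt (normc (ip (P x) x) * normc (ip (Q x) x)))).
  by rewrite -(ger0_norm (normc_ge0 _)) -sqrtr_sqr ler_wsqrtr ?bT.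
by rewrite ler_wsqrtr // ler_pM ?normc_ge0 ?le_numrad.
Qed.

Lemma numrange_bounded_sqr_hnormD P S1 S2 : norm_bounded S1 -> norm_bounded S2 ->
  (forall x, ip (P x) x = (`|S1 x|_H ^+ 2 + `|S2 x|_H ^+ 2)%:C) -> numrange_bounded P.
Proof.
move=> [M1 bS1] [M2 bS2] ipP; exists (M1 ^+ 2 + M2 ^+ 2) => x x1.
rewrite ipP normc_real ?addr_ge0 ?sqr_ge0 //.
have := bS1 x; have := bS2 x; rewrite x1 !mulr1.
have := hnorm_ge0 (S1 x); have := hnorm_ge0 (S2 x); nra.
Qed.

Lemma numrad_le_sqrt_mul_hnorm T P Q S1 S2 S3 S4 :
  norm_bounded S1 -> norm_bounded S2 -> norm_bounded S3 -> norm_bounded S4 ->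
  (forall x, ip (P x) x = (`|S1 x|_H ^+ 2 + `|S2 x|_H ^+ 2)%:C) ->
  (forall x, ip (Q x) x = (`|S3 x|_H ^+ 2 + `|S4 x|_H ^+ 2)%:C) ->
  (forall x, normc (ip (T x) x) <= `|S1 x|_H * `|S3 x|_H + `|S2 x|_H * `|S4 x|_H) ->
  numrad ip T <= Num.sqrt (numrad ip P) * Num.sqrt (numrad ip Q).
Proof.
move=> b1 b2 b3 b4 ipP ipQ bT.
apply: numrad_le_sqrt_mul => [||x _].
- exact: numrange_bounded_sqr_hnormD b1 b2 ipP.
- exact: numrange_bounded_sqr_hnormD b3 b4 ipQ.
rewrite ipP ipQ !normc_real ?addr_ge0 ?sqr_ge0 //.
apply: le_trans (sqr_dot2_le _ _ _ _).
by rewrite ler_sqr ?nnegrE ?normc_ge0 ?addr_ge0 ?mulr_ge0 ?hnorm_ge0 ?bT.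
Qed.

Section Commutator.
Variables A B As Bs : V -> V.
Hypotheses (adjA : is_adjoint ip A As) (adjB : is_adjoint ip B Bs).
Hypotheses (bA : norm_bounded A) (bB : norm_bounded B).

Local Notation cross x := (`|B x|_H * `|As x|_H + `|A x|_H * `|Bs x|_H).

Lemma normc_ip_anticomm_le x : normc (ip (A (B x) + B (A x)) x) <= cross x.
Proof.
rewrite ipDl (adjA (B x)) (adjB (A x)); apply: le_trans (le_normcD _ _) _.
by rewrite lerD ?normc_ip_le.
Qed.

Lemma normc_ip_comm_le x : normc (ip (A (B x) - B (A x)) x) <= cross x.
Proof.
rewrite ipBl (adjA (B x)) (adjB (A x)); apply: le_trans (le_normcD _ _) _.
by rewrite normcN lerD ?normc_ip_le.
Qed.

Let bAs := norm_bounded_adj bA adjA.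
Let bBs := norm_bounded_adj bB adjB.

Lemma numrad_le_sqrt_mul_adjAA T : (forall x, normc (ip (T x) x) <= cross x) ->
  numrad ip T <= Num.sqrt (numrad ip (fun x => As (A x) + A (As x)))
               * Num.sqrt (numrad ip (fun x => Bs (B x) + B (Bs x))).
Proof.
move=> bT; apply: (numrad_le_sqrt_mul_hnorm bA bAs bBs bB) => x.
- by rewrite ipDl (ip_adj_comp _ adjA) (ip_comp_adj _ adjA) rmorphD.
- by rewrite ipDl (ip_adj_comp _ adjB) (ip_comp_adj _ adjB) rmorphD addrC.
- by rewrite addrC mulrC; apply: bT.
Qed.

Lemma numrad_le_sqrt_mul_adjAAi T : (forall x, normc (ip (T x) x) <= cross x) ->
  numrad ip T <= Num.sqrt (numrad ip (fun x => As (A x) + Bs (B x)))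
               * Num.sqrt (numrad ip (fun x => A (As x) + B (Bs x))).
Proof.
move=> bT; apply: (numrad_le_sqrt_mul_hnorm bA bB bBs bAs) => x.
- by rewrite ipDl (ip_adj_comp _ adjA) (ip_adj_comp _ adjB) rmorphD.
- by rewrite ipDl (ip_comp_adj _ adjA) (ip_comp_adj _ adjB) rmorphD addrC.
- by rewrite addrC; apply: bT.
Qed.

End Commutator.

End InnerProduct.

Theorem theorem2p15 (R : realType) (V : lmodType R[i]) (ip : V -> V -> R[i])
  (hH : is_hilbert ip)
  (A B As Bs : V -> V)
  (hA : bounded_operator ip A) (hB : bounded_operator ip B)
  (hAs : is_adjoint ip A As) (hBs : is_adjoint ip B Bs) :
  (* (i) *)
  (numrad ip (fun x => A (B x) + B (A x))
     <= Num.sqrt (numrad ip (fun x => As (A x) + A (As x)))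
        * Num.sqrt (numrad ip (fun x => Bs (B x) + B (Bs x))) /\
   numrad ip (fun x => A (B x) - B (A x))
     <= Num.sqrt (numrad ip (fun x => As (A x) + A (As x)))
        * Num.sqrt (numrad ip (fun x => Bs (B x) + B (Bs x)))) /\
  (* (ii) *)
  (numrad ip (fun x => A (B x) + B (A x))
     <= Num.sqrt (numrad ip (fun x => As (A x) + Bs (B x)))
        * Num.sqrt (numrad ip (fun x => A (As x) + B (Bs x))) /\
   numrad ip (fun x => A (B x) - B (A x))
     <= Num.sqrt (numrad ip (fun x => As (A x) + Bs (B x)))
        * Num.sqrt (numrad ip (fun x => A (As x) + B (Bs x)))).
Proof.
have [hip _] := hH; have [[_ bA] [_ bB]] := (hA, hB).
have anticomm_le := normc_ip_anticomm_le hip hAs hBs.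
have comm_le := normc_ip_comm_le hip hAs hBs.
split; split.
- by apply: (numrad_le_sqrt_mul_adjAA hip hAs hBs bA bB); apply: anticomm_le.
- by apply: (numrad_le_sqrt_mul_adjAA hip hAs hBs bA bB); apply: comm_le.
- by apply: (numrad_le_sqrt_mul_adjAAi hip hAs hBs bA bB); apply: anticomm_le.
- by apply: (numrad_le_sqrt_mul_adjAAi hip hAs hBs bA bB); apply: comm_le.
Qed.
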